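(* For every integer $q\ge 3$, the length (number of edges) of a longest path in the mirror full binary tree $M_q$ is exactly $2q^2$.
   Context: Let $B_q$ be a full binary tree of height $q$ with vertices $b_{\ell,1},\dots,b_{\ell,2^\ell}$ on level $\ell\in\{0,\dots,q\}$, where for $\ell<q$ the vertex $b_{\ell,i}$ is adjacent to its children $b_{\ell+1,2i-1}$ and $b_{\ell+1,2i}$; let $R_q$ be a disjoint copy with vertices $r_{\ell,i}$ defined analogously. The mirror full binary tree $M_q$ is the graph obtained from the disjoint union of $B_q$ and $R_q$ by identifying $b_{q,i}$ with $r_{q,i}$ for every $i\in\{1,\dots,2^q\}$. A path is a sequence of distinct vertices with consecutive vertices adjacent; its length is its number of edges. *)

From mathcomp Require Import all_boot.
Set Implicit Arguments. Unset Strict Implicit. Unset Printing Implicit Defensive.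

(* Vertices of the mirror full binary tree M_q are encoded as triples
   (side, level, index) : bool * nat * nat, where side = false means the
   "blue" tree B_q and side = true the "red" tree R_q, level l in {0..q},
   and index i in {1..2^l} (1-indexed, as in the paper).
   Leaves are identified: the level-q vertex is always encoded with
   side = false, so (true, q, i) is not a vertex. *)
Definition vertex := (bool * nat * nat)%type.

Definition mvalid (q : nat) (v : vertex) : bool :=
  let: (s, l, i) := v in
  [&& l <= q, 0 < i, i <= 2 ^ l & (l == q) ==> ~~ s].

Definition mcanon (q : nat) (v : vertex) : vertex :=
  let: (s, l, i) := v in if l == q then (false, l, i) else (s, l, i).

Definition mchild (q : nat) (x y : vertex) : bool :=
  let: (s, l, i) := x in
  (l < q) && ((y == mcanon q (s, l.+1, i.*2.-1)) || (y == mcanon q (s, l.+1, i.*2))).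

Definition madj (q : nat) : rel vertex :=
  fun x y => [&& mvalid q x, mvalid q y & mchild q x y || mchild q y x].

(* A path in M_q: a nonempty sequence of distinct vertices of M_q with
   consecutive vertices adjacent. Its length is size p - 1 (edges). *)
Definition mpath (q : nat) (p : seq vertex) : bool :=
  match p with
  | [::] => false
  | x :: s => [&& uniq p, all (mvalid q) p & path (madj q) x s]
  end.

From mathcomp Require Import all_boot zify.
Set Implicit Arguments. Unset Strict Implicit. Unset Printing Implicit Defensive.

(* The descendants of the two level-l vertices with a given index induce a
   copy D of M_(q-l): two roots, each adjacent to the same-side roots of two
   lower copies of M_(q-l-1), with no edge between the lower copies.  A path
   can only enter or leave a lower copy through its roots, so by induction on
   the height h of D a path from one root of D to the other has at most 2h+1
   vertices and a path starting at a root at most (h+1)^2.  A path through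
   both roots spends the stretch between them in one lower copy, hence its two
   ends are disjoint rooted paths of the other copy; counting the cases bounds
   any path of D by max(2h^2+1, (h+1)^2) vertices.  Conversely, rooted paths
   with q^2 vertices ("snakes") in the two copies of M_(q-1) below b_{0,1},
   joined through b_{0,1}, form a path with 2q^2+1 vertices. *)

Lemma uniq_cat_notin (T : eqType) (s1 s2 : seq T) x :
  uniq (s1 ++ s2) -> x \in s1 -> x \notin s2.
Proof. by rewrite cat_uniq => /and3P[_ /hasPn nx _] xs; apply: contraL xs; apply: nx. Qed.

Lemma mem2_split (T : eqType) (x y : T) (s : seq T) : x != y -> x \in s -> y \in s ->
  exists s1 s2 s3, s = s1 ++ x :: s2 ++ y :: s3 \/ s = s1 ++ y :: s2 ++ x :: s3.
Proof.
move=> xy /splitPr[s1 s2]; rewrite mem_cat inE eq_sym (negbTE xy) /=.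
by case/orP=> /splitPr[a b]; do 3 eexists; [right; rewrite -catA | left].
Qed.

Lemma head_rev (T : Type) (x : T) (s : seq T) : head x (rev s) = last x s.
Proof. by case/lastP: s => // s y; rewrite rev_rcons last_rcons. Qed.

Section MirrorTree.
Variable q : nat.

(* Indices are 0-based here: [root c l k] is the paper's b_{l,k+1} (c = false)
   or r_{l,k+1} (c = true), so the children of index k are k.*2 and k.*2.+1. *)
Definition root (c : bool) (l k : nat) : vertex := mcanon q (c, l, k.+1).

(* The index of the level-l ancestor of v, for l <= v.1.2. *)
Definition anc (l : nat) (v : vertex) : nat := v.2.-1 %/ 2 ^ (v.1.2 - l).

Definition desc (l k : nat) (v : vertex) : bool :=
  [&& mvalid q v, l <= v.1.2 & anc l v == k].

Lemma rootE c l k : root c l k = (if l == q then false else c, l, k.+1).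
Proof. by rewrite /root /mcanon; case: (l == q). Qed.

Lemma root_level c l k : (root c l k).1.2 = l.
Proof. by rewrite rootE. Qed.

Lemma anc_root c l k : anc l (root c l k) = k.
Proof. by rewrite /anc rootE subnn divn1. Qed.

Lemma root_leaf c k : root c q k = root false q k.
Proof. by rewrite !rootE eqxx. Qed.

Lemma root_neq c l k : l < q -> root c l k != root (~~ c) l k.
Proof. by move=> lq; rewrite !rootE ltn_eqF //; case: c. Qed.

Lemma desc_root c l k : l <= q -> k < 2 ^ l -> desc l k (root c l k).
Proof.
move=> lq kl; rewrite /desc anc_root root_level leqnn eqxx !andbT rootE /=.
by case: eqP => /= _; rewrite lq kl ?implybT.
Qed.

Lemma desc_valid l k v : desc l k v -> mvalid q v.
Proof. by case/and3P. Qed.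

Lemma desc_level l k v : desc l k v -> l <= v.1.2.
Proof. by case/and3P. Qed.

Lemma desc_inj l j j' v : desc l j v -> desc l j' v -> j = j'.
Proof. by move=> /and3P[_ _ /eqP<-] /and3P[_ _ /eqP<-]. Qed.

Lemma anc_parent l v : l < v.1.2 -> (anc l.+1 v)./2 = anc l v.
Proof.
move=> lv; rewrite /anc -divn2 -divnMA -expnSr; congr (_ %/ 2 ^ _); lia.
Qed.

Lemma desc_parent l j v : desc l.+1 j v -> desc l j./2 v.
Proof.
case/and3P=> vv lv /eqP <-; rewrite /desc vv anc_parent // eqxx andbT; lia.
Qed.

Lemma desc_top l k v : desc l k v -> v.1.2 = l -> v = root v.1.1 l k.
Proof.
case: v => [[s a] i] /and3P[/and4P[aq i0 _ qs] _ /eqP <-] /= al.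
subst a; rewrite rootE /anc /= subnn divn1 prednK //.
by case: eqP qs => // -> /negbTE ->.
Qed.

Lemma desc_leaf k v : desc q k v -> v = root false q k.
Proof.
move=> dv; rewrite (desc_top dv) ?root_leaf //.
apply/eqP; rewrite eqn_leq (desc_level dv) andbT.
by case: v dv => [[s a] i] /desc_valid /and4P[].
Qed.

Lemma desc_deeper l k v : desc l k v ->
  v != root false l k -> v != root true l k -> l < v.1.2.
Proof.
move=> dv nf nt; rewrite ltn_neqAle (desc_level dv) andbT.
apply/eqP => /esym /(desc_top dv) E; move: nf nt; rewrite E.
by case: (v.1.1); rewrite eqxx ?andbF.
Qed.

Lemma madjC : symmetric (madj q).
Proof. by move=> x y; rewrite /madj andbCA orbC. Qed.

Lemma mcanon_level v : (mcanon q v).1.2 = v.1.2.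
Proof. by case: v => [[s l] i]; rewrite /mcanon; case: (l == q). Qed.

Lemma mcanon_idx v : (mcanon q v).2 = v.2.
Proof. by case: v => [[s l] i]; rewrite /mcanon; case: (l == q). Qed.

Lemma mchild_level u v : mchild q u v -> v.1.2 = u.1.2.+1.
Proof.
by case: u => [[s a] i] /andP[_ /orP[] /eqP ->]; rewrite mcanon_level.
Qed.

Lemma mchild_anc m u v : mchild q u v -> m <= u.1.2 -> anc m v = anc m u.
Proof.
move=> uv ma; have := mchild_level uv.
case: u uv ma => [[s a] i] /andP[_ vE] /= ma vlev.
have halfE : (v.2.-1)./2 = i.-1.
  by case: i vE => [|i] /orP[] /eqP ->; rewrite mcanon_idx //= ?uphalf_double ?half_double.
rewrite /anc /= -halfE vlev -divn2 -divnMA -expnS; congr (_ %/ 2 ^ _); lia.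
Qed.

Lemma madj_level u v : madj q u v -> u.1.2 != v.1.2.
Proof.
by case/and3P=> _ _ /orP[] /mchild_level ->; lia.
Qed.

Lemma madj_anc m u v : madj q u v -> m <= u.1.2 -> m <= v.1.2 -> anc m u = anc m v.
Proof.
case/and3P=> _ _ /orP[uv|vu] mu mv; first by rewrite (mchild_anc uv).
by rewrite (mchild_anc vu).
Qed.

Lemma madj_root c l k v : l < v.1.2 -> madj q (root c l k) v ->
  v = root c l.+1 k.*2 \/ v = root c l.+1 k.*2.+1.
Proof.
move=> lv /and3P[_ _ /orP[|/mchild_level]]; last by rewrite root_level; lia.
rewrite rootE /mchild => /andP[lq]; rewrite ltn_eqF //.
by rewrite /root doubleS => /orP[] /eqP ->; [left|right].
Qed.

(* Paths of M_q inside the copy of M_(q-l) spanned by [desc l k]. *)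
Definition dpath (l k : nat) (p : seq vertex) : bool :=
  [&& uniq p, all (desc l k) p & sorted (madj q) p].

Lemma dpath_uniq l k p : dpath l k p -> uniq p.
Proof. by case/and3P. Qed.

Lemma dpath_desc l k p v : dpath l k p -> v \in p -> desc l k v.
Proof. by case/and3P=> _ /allP dp _; apply: dp. Qed.

Lemma dpath1 l k x : dpath l k [:: x] = desc l k x.
Proof. by rewrite /dpath /= !andbT. Qed.

Lemma dpath_rev l k p : dpath l k (rev p) = dpath l k p.
Proof.
rewrite /dpath rev_uniq all_rev rev_sorted (@eq_sorted _ _ (madj q)) //.
by move=> x y; apply: madjC.
Qed.

Lemma dpath_cat l k s1 s2 : dpath l k (s1 ++ s2) -> dpath l k s1 /\ dpath l k s2.
Proof.
rewrite /dpath cat_uniq all_cat.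
by case/and3P=> /and3P[-> _ ->] /andP[-> ->] /cat_sorted2[-> ->].
Qed.

Lemma dpath_split l k s1 x s2 : dpath l k (s1 ++ x :: s2) ->
  dpath l k (rcons s1 x) /\ dpath l k (x :: s2).
Proof.
move=> dp; split; first by move: dp; rewrite -cat_rcons => /dpath_cat[].
by have [] := dpath_cat dp.
Qed.

Lemma dpath_tail l k x s : dpath l k (x :: s) -> dpath l k s.
Proof. by case/(dpath_cat (s1 := [:: x])). Qed.

Lemma dpath_init l k s x : dpath l k (rcons s x) -> dpath l k s.
Proof. by rewrite -cats1 => /dpath_cat[]. Qed.

Lemma dpath_cons y l k x s : desc l k x -> x \notin s -> madj q x (head y s) ->
  dpath l k s -> dpath l k (x :: s).
Proof.
case: s => [|z s] dx nx xz; first by rewrite dpath1.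
by case/and3P=> u a p; rewrite /dpath cons_uniq nx u /= dx xz; move: a p => /= -> ->.
Qed.

Lemma dpath_rcons y l k s x : desc l k x -> x \notin s -> madj q (last y s) x ->
  dpath l k s -> dpath l k (rcons s x).
Proof.
move=> dx nx xs ds; rewrite -dpath_rev rev_rcons (dpath_cons (y := y)) ?dpath_rev //.
  by rewrite mem_rev.
by rewrite head_rev madjC.
Qed.

Lemma dpath_glue l k s x t : dpath l k (rcons s x) -> dpath l k (x :: t) ->
  ~~ has (mem s) t -> dpath l k (s ++ x :: t).
Proof.
case/and3P=> u1 a1 p1 /and3P[u2 a2 p2] st.
move: u1 a1; rewrite rcons_uniq all_rcons => /andP[xs u1] /andP[_ a1].
have disj : ~~ has (mem s) (x :: t) by rewrite /= negb_or xs st.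
by rewrite /dpath sorted_cat_cons p1 [path _ _ _]p2 all_cat a1 a2 cat_uniq u1 u2 disj.
Qed.

Lemma dpath_leaf k p : dpath q k p -> size p <= 1.
Proof.
case: p => [|x [|y s]] //= dp.
have := dpath_uniq dp; rewrite /= (desc_leaf (dpath_desc dp (mem_head _ _))).
by rewrite (desc_leaf (dpath_desc (v := y) dp _)) ?mem_head // !inE eqxx orbT.
Qed.

Lemma path_anc m x s : path (madj q) x s -> all (fun v => m <= v.1.2) (x :: s) ->
  all (fun v => anc m v == anc m x) s.
Proof.
elim: s x => [|y s IH] x //= /andP[xy ys] /and3P[mx my ms].
by rewrite (madj_anc xy) // eqxx IH //= my.
Qed.

Lemma dpath_child l k x s : dpath l k (x :: s) ->
  root false l k \notin x :: s -> root true l k \notin x :: s ->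
  exists2 j, j./2 = k & dpath l.+1 j (x :: s).
Proof.
move=> dp nf nt.
have deep : all (fun v => l < v.1.2) (x :: s).
  apply/allP => v vp; apply: desc_deeper (dpath_desc dp vp) _ _.
    by apply: contraNneq nf => <-.
  by apply: contraNneq nt => <-.
case/and3P: dp => u /allP d ps; exists (anc l.+1 x).
  by rewrite anc_parent ?(allP deep) ?mem_head //; case/and3P: (d x (mem_head x s)) => _ _ /eqP.
have /allP same := path_anc ps deep.
rewrite /dpath u ps andbT; apply/allP => v vp; rewrite /desc (allP deep) //.
rewrite (desc_valid (d v vp)) /=; move: vp; rewrite inE => /orP[/eqP -> //|].
exact: same.
Qed.

Lemma dpath_parent l j p : dpath l.+1 j p -> dpath l j./2 p.
Proof.
by case/and3P=> u /allP a s; rewrite /dpath u s andbT; apply/allP => v /a /desc_parent.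
Qed.

Lemma dpath_disjoint l j j' s t : dpath l j s -> dpath l j' t -> j != j' ->
  ~~ has (mem s) t.
Proof.
move=> ds dt; apply: contraNN => /hasP[v vt vs].
by rewrite (desc_inj (dpath_desc ds vs) (dpath_desc dt vt)).
Qed.

Lemma root_notin_child c l k j p : dpath l.+1 j p -> root c l k \notin p.
Proof. by move=> dp; apply/negP => /(dpath_desc dp) /desc_level; rewrite root_level ltnn. Qed.

Lemma root_adj_child c l k j v : desc l.+1 j v -> madj q (root c l k) v ->
  v = root c l.+1 j.
Proof.
case/and3P=> _ lv /eqP <- /(madj_root lv) vE.
by case: vE => ->; rewrite anc_root.
Qed.

Lemma dpath_descend c l k y s : dpath l k (root c l k :: y :: s) ->
  root (~~ c) l k \notin y :: s ->
  exists j, [/\ j./2 = k, y = root c l.+1 j & dpath l.+1 j (y :: s)].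
Proof.
move=> dp nr; have nc : root c l k \notin y :: s by case/andP: (dpath_uniq dp).
have [j jk dj] : exists2 j, j./2 = k & dpath l.+1 j (y :: s).
  by apply: dpath_child (dpath_tail dp) _ _; case: c nc nr dp.
exists j; split => //; apply: (root_adj_child (k := k) (dpath_desc dj (mem_head y s))).
by case/and3P: dp => _ _ /andP[].
Qed.

Lemma dpath_cross_descend c l k s :
  dpath l k (root c l k :: rcons s (root (~~ c) l k)) ->
  exists j s', [/\ j./2 = k, s = root c l.+1 j :: s',
    last (root c l.+1 j) s' = root (~~ c) l.+1 j & dpath l.+1 j s].
Proof.
case: s => [|y s] dp.
  by case/and3P: dp => _ _ /andP[/madj_level]; rewrite !root_level eqxx.
have [dy s_adj] : dpath l k (y :: s) /\
    path (madj q) (root c l k) (rcons (y :: s) (root (~~ c) l k)).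
  by split; [apply: dpath_init (dpath_tail dp) | case/and3P: dp].
have := dpath_uniq dp; rewrite cons_uniq rcons_uniq => /and3P[nc nr _].
have {}nc : root c l k \notin y :: s.
  by apply: contra nc => cin; rewrite mem_rcons inE cin orbT.
have [j jk dj] : exists2 j, j./2 = k & dpath l.+1 j (y :: s).
  by apply: dpath_child dy _ _; case: c nc nr {dp s_adj}.
move: s_adj; rewrite /= rcons_path => /and3P[yE _]; rewrite madjC => lastE.
have yj := root_adj_child (k := k) (dpath_desc dj (mem_head y s)) yE.
exists j, s; rewrite -yj; split => //.
exact: (root_adj_child (k := k) (dpath_desc dj (mem_last y s)) lastE).
Qed.

Lemma crossing_size_le n c l k s : l + n = q -> dpath l k (root c l k :: s) ->
  last (root c l k) s = root (~~ c) l k -> size s <= n.*2.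
Proof.
elim: n l k s => [|n IH] l k s lq dp.
  by rewrite addn0 in lq; subst l; have := dpath_leaf dp; case: s {dp}.
case/lastP: s dp => [|s z] dp /=; first by move/eqP; rewrite (negbTE (root_neq _ _ _)) //; lia.
rewrite last_rcons => zE; subst z; rewrite size_rcons doubleS ltnS.
have [j [s' [_ -> slast dj]]] := dpath_cross_descend dp.
by rewrite /= ltnS; apply: IH dj slast; lia.
Qed.

Lemma rooted_size_le n c l k s : l + n = q -> dpath l k (root c l k :: s) ->
  size s < n.+1 ^ 2.
Proof.
elim: n c l k s => [|n IH] c l k s lq dp.
  by rewrite addn0 in lq; subst l; have := dpath_leaf dp; case: s {dp}.
have avoid c' s' : dpath l k (root c' l k :: s') -> root (~~ c') l k \notin s' ->
    size s' <= n.+1 ^ 2.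
  case: s' => [//|y s'] dp' nr; have [j [_ -> dj]] := dpath_descend dp' nr.
  by apply: IH dj; lia.
have [rin|rout] := boolP (root (~~ c) l k \in s); last first.
  by have := avoid c s dp rout; rewrite -!mulnn; nia.
case/splitPr: rin dp => s1 s2 dp.
have nc : root (~~ ~~ c) l k \notin s2.
  by rewrite negbK; case/andP: (dpath_uniq dp); rewrite mem_cat inE !negb_or => /and3P[].
move: dp; rewrite -cat_cons => /dpath_split[dp1 dp2].
have := crossing_size_le lq dp1 (last_rcons _ _ _).
have := avoid (~~ c) s2 dp2 nc.
by rewrite size_cat size_rcons /= -!mulnn; lia.
Qed.

Lemma rooted_avoid_size_le n c l k s : l + n.+1 = q -> dpath l k (root c l k :: s) ->
  root (~~ c) l k \notin s -> size s <= n.+1 ^ 2.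
Proof.
case: s => [//|y s] lq dp nr; have [j [_ -> dj]] := dpath_descend dp nr.
by apply: rooted_size_le dj; lia.
Qed.

Lemma one_root_size_le n c l k p : l + n.+1 = q -> dpath l k p ->
  root c l k \in p -> root (~~ c) l k \notin p -> size p <= (n.+1 ^ 2).*2.+1.
Proof.
move=> lq dp pc; case/splitPr: pc dp => p1 p2 dp.
rewrite mem_cat inE !negb_or => /and3P[n1 _ n2]; have [dp1 dp2] := dpath_split dp.
rewrite -dpath_rev rev_rcons in dp1.
have := rooted_avoid_size_le lq dp1; rewrite mem_rev => /(_ n1).
have := rooted_avoid_size_le lq dp2 n2.
by rewrite size_cat size_rev /=; lia.
Qed.

Lemma two_arms_size_le n c l k s t : l + n = q ->
  dpath l k (root c l k :: s) -> dpath l k (root (~~ c) l k :: t) ->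
  ~~ has (mem (root c l k :: s)) (root (~~ c) l k :: t) ->
  0 < n /\ size s + size t <= (n ^ 2).*2.
Proof.
case: n => [|n] lq ds dt disj.
  by rewrite addn0 in lq; subst l; move: disj; rewrite /= !root_leaf mem_head.
have ns : root (~~ c) l k \notin s.
  by apply: contra disj => rs; rewrite /= inE rs orbT.
have nt : root (~~ ~~ c) l k \notin t.
  rewrite negbK; apply: contra disj => ct; apply/hasP; exists (root c l k).
    by rewrite inE ct orbT.
  exact: mem_head.
have := rooted_avoid_size_le lq ds ns; have := rooted_avoid_size_le lq dt nt.
by split => //; lia.
Qed.

(* The stretch between the roots runs through one child, so both arms must
   enter the other one. *)
Lemma arms_same_child c l k p1 a p2 b p3 :
  dpath l k (rcons p1 a ++ root c l k :: p2 ++ root (~~ c) l k :: b :: p3) ->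
  exists j, [/\ a = root c l.+1 j, b = root (~~ c) l.+1 j,
    dpath l.+1 j (a :: rev p1), dpath l.+1 j (b :: p3)
    & ~~ has (mem (a :: rev p1)) (b :: p3)].
Proof.
move=> dp; have u := dpath_uniq dp.
have [dA dR] := dpath_split dp; rewrite -cat_cons in dR; have [dM dC] := dpath_split dR.
have disj1 x : x \in a :: rev p1 -> x \notin root c l k :: p2 ++ root (~~ c) l k :: b :: p3.
  by move=> xa; apply: uniq_cat_notin u _; rewrite mem_rcons !inE -mem_rev.
have disj2 x : x \in rcons p1 a ++ root c l k :: p2 -> x \notin root (~~ c) l k :: b :: p3.
  by apply: uniq_cat_notin; rewrite -catA.
rewrite -dpath_rev !rev_rcons in dA.
have [j1 [j1k aE d1]] :
    exists j1, [/\ j1./2 = k, a = root c l.+1 j1 & dpath l.+1 j1 (a :: rev p1)].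
  apply: dpath_descend dA _; apply/negP => /disj1.
  by rewrite !inE mem_cat inE eqxx !orbT.
have [j2 [p2' [j2k p2E p2last _]]] := dpath_cross_descend dM.
have [j3 [j3k bE d3]] :
    exists j3, [/\ j3./2 = k, b = root (~~ c) l.+1 j3 & dpath l.+1 j3 (b :: p3)].
  apply: dpath_descend dC _; rewrite negbK; apply/negP => bin.
  have := disj2 (root c l k); rewrite mem_cat mem_head orbT inE negb_or bin andbF.
  by move=> /(_ isT).
have j12 : j1 != j2.
  apply: contraNneq (disj1 a (mem_head _ _)) => j12.
  by rewrite aE j12 p2E inE mem_cat mem_head !orbT.
have j32 : j3 != j2.
  have last2 : root (~~ c) l.+1 j2 \in rcons p1 a ++ root c l k :: p2.
    by rewrite mem_cat inE p2E -p2last mem_last !orbT.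
  by apply: contraNneq (disj2 _ last2) => j32; rewrite -j32 -bE !inE eqxx orbT.
have j31 : j3 = j1 by move: j12 j32 => /eqP j12 /eqP j32; clear -j1k j2k j3k j12 j32; lia.
subst j3; exists j1; split => //; apply/hasPn => v vC; apply: contraL (disj1 v) _.
by rewrite in_cons mem_cat in_cons vC !orbT.
Qed.

Lemma two_roots_inner_size_le n c l k p1 a p2 b p3 : l + n.+1 = q ->
  dpath l k (rcons p1 a ++ root c l k :: p2 ++ root (~~ c) l k :: b :: p3) ->
  size (rcons p1 a ++ root c l k :: p2 ++ root (~~ c) l k :: b :: p3) <= (n.+1 ^ 2).*2.+1.
Proof.
move=> lq dp; have [j [aE bE dA dC disj]] := arms_same_child dp.
have [_ dR] := dpath_split dp; rewrite -cat_cons in dR; have [dM _] := dpath_split dR.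
have := crossing_size_le (s := rcons p2 (root (~~ c) l k)) lq dM (last_rcons _ _ _).
have lq1 : l.+1 + n = q by rewrite -lq addSnnS.
rewrite aE bE in dA dC disj; have [] := two_arms_size_le lq1 dA dC disj.
by rewrite !size_cat !size_rcons /= size_cat /= size_rev -!mulnn; nia.
Qed.

Lemma two_roots_size_le n c l k p1 p2 p3 : l + n.+1 = q ->
  dpath l k (p1 ++ root c l k :: p2 ++ root (~~ c) l k :: p3) ->
  size (p1 ++ root c l k :: p2 ++ root (~~ c) l k :: p3) <= maxn (n.+1 ^ 2).*2.+1 (n.+2 ^ 2).
Proof.
move=> lq; rewrite leq_max; case/lastP: p1 => [|p1 a] dp.
  by rewrite (rooted_size_le lq dp) orbT.
case: p3 dp => [|b p3] dp; last by rewrite (two_roots_inner_size_le lq dp).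
have E : rcons p1 a ++ root c l k :: p2 ++ [:: root (~~ c) l k] =
    rcons (rcons p1 a ++ root c l k :: p2) (root (~~ c) l k) by rewrite rcons_cat cats1.
rewrite E -dpath_rev rev_rcons in dp.
by rewrite E -size_rev rev_rcons (rooted_size_le lq dp) orbT.
Qed.

(* For n >= 2 the bound is 2n^2+1; the (n+1)^2 term is only needed for n = 1,
   where the subgraph is a 4-cycle. *)
Lemma dpath_size_le n l k p : l + n = q -> dpath l k p ->
  size p <= maxn (n ^ 2).*2.+1 (n.+1 ^ 2).
Proof.
elim: n l k p => [|n IH] l k p lq dp.
  by rewrite addn0 in lq; subst l; rewrite (leq_trans (dpath_leaf dp)).
have mono : maxn (n ^ 2).*2.+1 (n.+1 ^ 2) <= maxn (n.+1 ^ 2).*2.+1 (n.+2 ^ 2).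
  by rewrite -!mulnn; lia.
have [f|f] := boolP (root false l k \in p); have [t|t] := boolP (root true l k \in p).
- have lq' : l < q by lia.
  have [p1 [p2 [p3 [pE|pE]]]] := mem2_split (root_neq false k lq') f t; rewrite pE in dp *.
    exact: (two_roots_size_le (c := false) lq dp).
  exact: (two_roots_size_le (c := true) lq dp).
- by rewrite leq_max (one_root_size_le (c := false) lq dp).
- by rewrite leq_max (one_root_size_le (c := true) lq dp).
case: p dp f t => [//|x s] dp f t; have [j _ dj] := dpath_child dp f t.
by apply: leq_trans mono; apply: IH dj; lia.
Qed.

Lemma madj_root_child c l k j : l < q -> k < 2 ^ l -> j./2 = k ->
  madj q (root c l k) (root c l.+1 j).
Proof.
move=> lq kl jk; have jl : j < 2 ^ l.+1 by rewrite expnS; lia.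
rewrite /madj (desc_valid (desc_root c (ltnW lq) kl)) (desc_valid (desc_root c lq jl)) /=.
rewrite {1}[root c l k]rootE ltn_eqF // /mchild lq /root doubleS /=.
have [->|->] : j = k.*2 \/ j = k.*2.+1 by lia.
  by rewrite eqxx.
by rewrite eqxx orbT.
Qed.

Lemma dpath_hang c l k j s : l < q -> k < 2 ^ l -> j./2 = k ->
  head (root c l k) s = root c l.+1 j -> dpath l.+1 j s -> dpath l k (root c l k :: s).
Proof.
move=> lq kl jk hs ds; apply: (dpath_cons (y := root c l k)).
- by apply: desc_root; rewrite // ltnW.
- exact: root_notin_child ds.
- by rewrite hs madj_root_child.
by rewrite -jk dpath_parent.
Qed.

Fixpoint cross (c : bool) (n l k : nat) : seq vertex :=
  if n is n'.+1 then root c l k :: rcons (cross c n' l.+1 k.*2) (root (~~ c) l k)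
  else [:: root c l k].

Fixpoint snake (c : bool) (n l k : nat) : seq vertex :=
  if n is n'.+1 then
    root c l k :: cross c n' l.+1 k.*2 ++ root (~~ c) l k :: snake (~~ c) n' l.+1 k.*2.+1
  else [:: root c l k].

Lemma head_cross x c n l k : head x (cross c n l k) = root c l k.
Proof. by case: n. Qed.

Lemma head_snake x c n l k : head x (snake c n l k) = root c l k.
Proof. by case: n. Qed.

Lemma size_cross c n l k : size (cross c n l k) = n.*2.+1.
Proof. by elim: n l k => //= n IH l k; rewrite size_rcons IH. Qed.

Lemma size_snake c n l k : size (snake c n l k) = n.+1 ^ 2.
Proof.
elim: n c l k => //= n IH c l k.
by rewrite size_cat size_cross /= IH -!mulnn; lia.
Qed.

Lemma dpath_cross c n l k : l + n = q -> k < 2 ^ l ->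
  dpath l k (cross c n l k) /\ last (root c l k) (cross c n l k) = root (~~ c) l k.
Proof.
elim: n l k => [|n IH] l k lq kl.
  by rewrite addn0 in lq; subst l; rewrite dpath1 desc_root //= root_leaf [RHS]root_leaf.
have lq' : l < q by lia.
have jk : (k.*2)./2 = k by rewrite doubleK.
have lq1 : l.+1 + n = q by lia.
have kl1 : k.*2 < 2 ^ l.+1 by rewrite expnS; lia.
have [dX lastX] := IH l.+1 k.*2 lq1 kl1.
have dr c' : desc l k (root c' l k) by apply: desc_root; rewrite // ltnW.
split; last by rewrite /= last_rcons.
apply: (dpath_cons (y := root c l k)) => //.
- by rewrite mem_rcons inE negb_or root_neq // (root_notin_child _ _ dX).
- by rewrite headI head_cross madj_root_child.
apply: (dpath_rcons (y := root c l.+1 k.*2)) => //.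
- exact: root_notin_child dX.
- by rewrite lastX madjC madj_root_child.
by rewrite -[in dpath l k]jk dpath_parent.
Qed.

Lemma dpath_snake c n l k : l + n = q -> k < 2 ^ l -> dpath l k (snake c n l k).
Proof.
elim: n c l k => [|n IH] c l k lq kl.
  by rewrite addn0 in lq; subst l; rewrite dpath1 desc_root.
have lq' : l < q by lia.
have lq1 : l.+1 + n = q by lia.
have kl1 : k.*2.+1 < 2 ^ l.+1 by rewrite expnS; lia.
have jk : (k.*2.+1)./2 = k by rewrite /= uphalf_double.
have dY := IH (~~ c) l.+1 k.*2.+1 lq1 kl1.
have [dX _] := dpath_cross c lq1 (ltnW kl1).
rewrite /= -cat_cons; apply: dpath_glue; first exact: (dpath_cross c lq kl).1.
  exact: dpath_hang lq' kl jk (head_snake _ _ _ _ _) dY.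
rewrite has_sym /= negb_or (root_notin_child _ _ dY) has_sym.
by apply: dpath_disjoint dX dY _; rewrite neq_ltn ltnSn.
Qed.

Lemma dpath_two_snakes c n l k : l + n.+1 = q -> k < 2 ^ l ->
  dpath l k (rev (snake c n l.+1 k.*2) ++ root c l k :: snake c n l.+1 k.*2.+1).
Proof.
move=> lq kl; have lq1 : l.+1 + n = q by lia.
have kl1 : k.*2.+1 < 2 ^ l.+1 by rewrite expnS; lia.
have lq' : l < q by lia.
have dX := dpath_snake c lq1 (ltnW kl1); have dY := dpath_snake c lq1 kl1.
apply: dpath_glue.
- rewrite -rev_cons dpath_rev.
  by apply: dpath_hang lq' kl _ (head_snake _ _ _ _ _) dX; rewrite doubleK.
- by apply: dpath_hang lq' kl _ (head_snake _ _ _ _ _) dY; rewrite /= uphalf_double.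
by rewrite has_sym has_rev; apply: dpath_disjoint dY dX _; rewrite neq_ltn ltnSn orbT.
Qed.

Lemma desc00 : desc 0 0 =1 mvalid q.
Proof.
case=> [[s l] i]; rewrite /desc /anc /= subn0.
by case: and4P => //= -[_ i0 il _]; rewrite divn_small //; lia.
Qed.

Lemma mpath_dpath p : mpath q p = (p != [::]) && dpath 0 0 p.
Proof. by case: p => // x s; rewrite /dpath (eq_all desc00). Qed.
End MirrorTree.

Theorem mainTheorem19 (q : nat) : 3 <= q ->
  (exists p : seq vertex, mpath q p /\ (size p).-1 = 2 * q ^ 2) /\
  (forall p : seq vertex, mpath q p -> (size p).-1 <= 2 * q ^ 2).
Proof.
move=> q3; have lq : 0 + q.-1.+1 = q by lia.
split.
  exists (rev (snake q false q.-1 1 0) ++ root q false 0 0 :: snake q false q.-1 1 1).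
  rewrite mpath_dpath (dpath_two_snakes _ lq) // andbT -size_eq0 !size_cat size_rev /=.
  by rewrite !size_snake addnS prednK ?addnn -?mul2n //; lia.
move=> p; rewrite mpath_dpath => /andP[_ /(dpath_size_le (n := q) (l := 0))].
have -> : maxn (q ^ 2).*2.+1 (q.+1 ^ 2) = (q ^ 2).*2.+1.
  by apply/maxn_idPl; rewrite -!mulnn; nia.
by move=> /(_ erefl); lia.
Qed.
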